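(* Membership queries for $k$-safety hyperproperties are, in general, undecidable: there exist $k$, a finite alphabet $\Sigma$ and a $k$-safety hyperproperty $\mathbf{S}$ over $\Sigma$ such that it is undecidable, given a finite set $T \subseteq \Sigma^*$ of finite traces, whether $T \in \mathrm{Bad}(\mathbf{S})$.
   Context: For finite $T \subseteq \Sigma^*$ and $T' \subseteq \Sigma^\omega$, $T \le T'$ means every $t \in T$ is a prefix of some $t' \in T'$. A hyperproperty is a set $\mathbf{S} \subseteq \mathcal{P}(\Sigma^\omega)$; $\mathrm{Bad}(\mathbf{S}) = \{T \subseteq \Sigma^* \text{ finite} \mid \forall T' \subseteq \Sigma^\omega.\ T \le T' \Rightarrow T' \notin \mathbf{S}\}$. $\mathbf{S}$ is a $k$-safety hyperproperty if every $T' \subseteq \Sigma^\omega$ with $T' \notin \mathbf{S}$ has some $T \in \mathrm{Bad}(\mathbf{S})$ with $|T| \le k$ and $T \le T'$. *)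

From Stdlib Require List.
From mathcomp Require Import all_boot.
Set Implicit Arguments. Unset Strict Implicit. Unset Printing Implicit Defensive.

Definition itrace (Sigma : Type) := nat -> Sigma.

Definition is_prefix (Sigma : Type) (t : seq Sigma) (t' : itrace Sigma) : Prop :=
  forall i (x0 : Sigma), i < size t -> nth x0 t i = t' i.

Definition hyperprop (Sigma : Type) := (itrace Sigma -> Prop) -> Prop.

(* Finite sets T of finite traces are represented by lists (membership =
   list membership; duplicates/order irrelevant). *)
Definition trace_le (Sigma : eqType) (T : seq (seq Sigma)) (T' : itrace Sigma -> Prop) : Prop :=
  forall t, t \in T -> exists t', T' t' /\ is_prefix t t'.

Definition Bad (Sigma : eqType) (S : hyperprop Sigma) (T : seq (seq Sigma)) : Prop :=
  forall T' : itrace Sigma -> Prop, trace_le T T' -> ~ S T'.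

Definition card_traces (Sigma : eqType) (T : seq (seq Sigma)) : nat := size (undup T).

Definition k_safety (Sigma : eqType) (k : nat) (S : hyperprop Sigma) : Prop :=
  forall T' : itrace Sigma -> Prop, ~ S T' ->
    exists T : seq (seq Sigma), Bad S T /\ card_traces T <= k /\ trace_le T T'.

Inductive prog : Type :=
| PZero : prog
| PSucc : prog
| PProj : nat -> prog
| PComp : prog -> list prog -> prog
| PRec  : prog -> prog -> prog
| PMu   : prog -> prog.

Inductive eval : prog -> seq nat -> nat -> Prop :=
| eval_zero v : eval PZero v 0
| eval_succ v : eval PSucc v (head 0 v).+1
| eval_proj i v : eval (PProj i) v (nth 0 v i)
| eval_comp f gs v ys y :
    List.Forall2 (fun g r => eval g v r) gs ys -> eval f ys y -> eval (PComp f gs) v y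
| eval_rec0 f g w y : eval f w y -> eval (PRec f g) (0 :: w) y
| eval_recS f g n w z y :
    eval (PRec f g) (n :: w) z -> eval g (n :: z :: w) y -> eval (PRec f g) (n.+1 :: w) y
| eval_mu f v n :
    eval f (n :: v) 0 ->
    (forall m, m < n -> exists y, eval f (m :: v) y.+1) ->
    eval (PMu f) v n.

Definition cpair (a b : nat) : nat := (a + b) * (a + b).+1 %/ 2 + b.

Fixpoint enc_list (A : Type) (e : A -> nat) (l : seq A) : nat :=
  match l with
  | [::] => 0
  | x :: l' => (cpair (e x) (enc_list e l')).+1
  end.

Definition enc_letter (Sigma : finType) (a : Sigma) : nat := enum_rank a.

Definition enc_traces (Sigma : finType) (T : seq (seq Sigma)) : nat :=
  enc_list (enc_list (@enc_letter Sigma)) T.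

Definition decidable_traces (Sigma : finType) (P : seq (seq Sigma) -> Prop) : Prop :=
  exists p : prog, forall T : seq (seq Sigma),
    (P T -> eval p [:: enc_traces T] 1) /\ (~ P T -> eval p [:: enc_traces T] 0).

(* Diagonalisation.  Index each program p by the finite trace u_p = 1^c 0,
   where c is a numeral coding p, and let X be the set of those u_p such that
   p does not answer 1 on the singleton {u_p}.  The hyperproperty "no trace
   extends an element of X" is 1-safety.  Since 1^c 0^omega extends the
   numeral 1^c 0 and no other one, {u_p} is bad exactly when u_p lies in X.
   A decision procedure p for Bad would thus answer 1 on {u_p} iff it does
   not. *)

From Stdlib Require Import Classical.
From mathcomp Require Import all_boot.

Set Implicit Arguments.
Unset Strict Implicit.
Unset Printing Implicit Defensive.

Fixpoint eval_deterministic p v y (H : eval p v y) {struct H} :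
  forall y', eval p v y' -> y = y'.
Proof.
destruct H as [v|v|i v|f gs v ys y Hgs Hf|f g w y Hf|f g n w z y Hr Hg|f v n H0 Hlt];
  move=> y' H'.
- by inversion H'.
- by inversion H'.
- by inversion H'.
- inversion H' as [| | |f1 gs1 v1 ys1 y1 Hgs1 Hf1| | |]; subst.
  have Eys : ys = ys1.
  { clear -Hgs Hgs1 eval_deterministic.
    elim: Hgs ys1 Hgs1 => [|g r gs' rs' Hgr _ IH] ys1 Hgs1;
      inversion Hgs1 as [|g1 r1 gs1' rs1 Hgr1 Hrs1]; subst => //.
    congr (_ :: _); [exact: eval_deterministic _ _ _ Hgr _ Hgr1 | exact: IH]. }
  subst; exact: eval_deterministic _ _ _ Hf _ Hf1.
- inversion H' as [| | | |f1 g1 w1 y1 Hf1| |]; subst.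
  exact: eval_deterministic _ _ _ Hf _ Hf1.
- inversion H' as [| | | | |f1 g1 n1 w1 z1 y1 Hr1 Hg1|]; subst.
  have Ez := eval_deterministic _ _ _ Hr _ Hr1; subst.
  exact: eval_deterministic _ _ _ Hg _ Hg1.
- inversion H' as [| | | | | |f1 v1 n1 H01 Hlt1]; subst.
  case: (ltngtP n y') => // Hny'.
  + case: (Hlt1 n Hny') => y0 Hy0.
    by have := eval_deterministic _ _ _ H0 _ Hy0.
  + case: (Hlt y' Hny') => y0 Hy0.
    by have := eval_deterministic _ _ _ Hy0 _ H01.
Qed.

Fixpoint prog_tree (p : prog) : GenTree.tree nat :=
  match p with
  | PZero => GenTree.Node 0 [::]
  | PSucc => GenTree.Node 1 [::]
  | PProj i => GenTree.Node 2 [:: GenTree.Leaf i]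
  | PComp f gs => GenTree.Node 3 (prog_tree f :: map prog_tree gs)
  | PRec f g => GenTree.Node 4 [:: prog_tree f; prog_tree g]
  | PMu f => GenTree.Node 5 [:: prog_tree f]
  end.

Fixpoint prog_tree_inj p : forall q, prog_tree p = prog_tree q -> p = q.
Proof.
move=> q; case: p => [| |i|f gs|f g|f]; case: q => [| |i'|f' gs'|f' g'|f'] //=.
- by case=> ->.
- case=> /prog_tree_inj -> Egs; congr PComp.
  elim: gs gs' Egs => [|g gs IH] [|g' gs'] //= [/prog_tree_inj -> /IH -> //].
- by case=> /prog_tree_inj -> /prog_tree_inj ->.
- by case=> /prog_tree_inj ->.
Qed.

Definition prog_code (p : prog) : nat := pickle (prog_tree p).

Lemma prog_code_inj : injective prog_code.
Proof. by move=> p q /(pcan_inj pickleK) /prog_tree_inj. Qed.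

Definition unary (n : nat) : seq bool := rcons (nseq n true) false.

Definition unary_itrace (n : nat) : itrace bool := fun i => i < n.

Lemma size_unary n : size (unary n) = n.+1.
Proof. by rewrite size_rcons size_nseq. Qed.

Lemma nth_unary x0 n i : i <= n -> nth x0 (unary n) i = (i < n).
Proof.
rewrite /unary nth_rcons size_nseq leq_eqVlt => /orP[/eqP->|lt_in].
  by rewrite ltnn eqxx.
by rewrite lt_in nth_nseq lt_in.
Qed.

Lemma unary_inj : injective unary.
Proof. by move=> m n /(congr1 size); rewrite !size_unary => -[]. Qed.

Lemma prefix_unary n : is_prefix (unary n) (unary_itrace n).
Proof. by move=> i x0; rewrite size_unary ltnS; apply: nth_unary. Qed.

Lemma prefix_unary_itrace m n : is_prefix (unary m) (unary_itrace n) -> m = n.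
Proof.
move=> Hmn; have agree i : i <= m -> (i < m) = (i < n).
  by move=> le_im; rewrite -(nth_unary false le_im) Hmn // size_unary ltnS.
case: (ltngtP m n) => // [lt_mn|lt_nm].
  by move: (agree m (leqnn m)); rewrite ltnn lt_mn.
by move: (agree n (ltnW lt_nm)); rewrite lt_nm ltnn.
Qed.

Section AvoidHyperproperty.

Variables (Sigma : eqType) (X : seq Sigma -> Prop).

Definition avoid : hyperprop Sigma :=
  fun T' => forall t', T' t' -> forall t, X t -> ~ is_prefix t t'.

Lemma Bad_avoid1 t : X t -> Bad avoid [:: t].
Proof.
move=> Xt T' le_tT' avoidT'.
have [t' [T't' t_t']] := le_tT' t (mem_head _ _).
exact: avoidT' t' T't' t Xt t_t'.
Qed.

Lemma avoid_k_safety : k_safety 1 avoid.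
Proof.
move=> T' not_avoid; apply: NNPP => no_bad; apply: not_avoid => t' T't' t Xt t_t'.
apply: no_bad; exists [:: t]; split; first exact: Bad_avoid1.
split=> // u; rewrite mem_seq1 => /eqP ->.
by exists t'.
Qed.

End AvoidHyperproperty.

Lemma Bad_avoid_unary (X : seq bool -> Prop) n :
  (forall t, X t -> exists m, t = unary m) ->
  Bad (avoid X) [:: unary n] -> X (unary n).
Proof.
move=> X_unary bad_n; apply: NNPP => notX.
apply: (bad_n (fun t' => t' = unary_itrace n)).
  move=> t; rewrite mem_seq1 => /eqP ->.
  by exists (unary_itrace n); split=> //; apply: prefix_unary.
move=> _ -> t Xt; have [m Etm] := X_unary t Xt; subst t.
by move=> /prefix_unary_itrace Emn; subst m.
Qed.

Lemma not_decidable_diagonal (c : prog -> seq (seq bool)) P :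
  (forall p, P (c p) <-> ~ eval p [:: enc_traces (c p)] 1) ->
  ~ decidable_traces P.
Proof.
move=> diagP [p decide_p]; have [yes no] := decide_p (c p).
have notP : ~ P (c p) by move=> Pc; exact: (diagP p).1 Pc (yes Pc).
apply: (notP); apply/diagP => out1.
by have := eval_deterministic (no notP) out1.
Qed.

Definition prog_index (p : prog) : seq bool := unary (prog_code p).

Definition diagonal_set (t : seq bool) : Prop :=
  exists p, t = prog_index p /\ ~ eval p [:: enc_traces [:: t]] 1.

Lemma Bad_diagonal p :
  Bad (avoid diagonal_set) [:: prog_index p] <->
  ~ eval p [:: enc_traces [:: prog_index p]] 1.
Proof.
split=> [bad_p | out_p]; last by apply: Bad_avoid1; exists p.
have [|q [/unary_inj/prog_code_inj <- //]] := Bad_avoid_unary _ bad_p.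
by move=> _ [q [-> _]]; exists (prog_code q).
Qed.

Theorem corollary3 :
  exists (k : nat) (Sigma : finType) (S : hyperprop Sigma),
    k_safety k S /\ ~ decidable_traces (fun T => Bad S T).
Proof.
exists 1, bool, (avoid diagonal_set); split; first exact: avoid_k_safety.
exact: (@not_decidable_diagonal (fun p => [:: prog_index p])
          (Bad (avoid diagonal_set)) Bad_diagonal).
Qed.
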